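(* Let $p\ge 1$ and let $w(0),\ldots,w(p)$ be positive weights. For $p\times p$ orthogonal projectors $P_1,P_2$ (i.e. real matrices with $P_i=P_i'=P_i^2$, where the zero matrix is allowed as a projector of rank $0$) with ranks $k_1,k_2\in\{0,\ldots,p\}$, define \[ D_w^2(P_1,P_2)=\tfrac12\,\|w(k_1)P_1-w(k_2)P_2\|^2, \] where $\|\cdot\|$ is the Frobenius norm, and $D_w(P_1,P_2)\ge 0$ its square root. Then for every choice of positive weights $w$, $D_w$ is a metric on the set of $p\times p$ orthogonal projectors. Moreover, with \[ m(k_1,k_2)=\frac{w^2(k_1)k_1+w^2(k_2)k_2}{2}, \] for all orthogonal projectors $P_1,P_2$ of ranks $k_1,k_2$, \[ m(k_1,k_2)-w(k_1)w(k_2)\min\{k_1,k_2\}\;\le\; D_w^2(P_1,P_2)\;\le\; m(k_1,k_2)+w(k_1)w(k_2)\min\{p-k_1-k_2,0\}, \] and these bounds are sharp, i.e. for given $k_1,k_2$ each bound is attained by some pair of orthogonal projectors of ranks $k_1,k_2$.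
   Context: An orthogonal projector is a $p\times p$ real matrix $P$ with $P=P'=P^2$; its rank equals its trace. The Frobenius norm is $\|A\|^2=\mathrm{tr}(A'A)$. *)

From mathcomp Require Import all_boot all_order all_algebra.
From mathcomp Require Import reals.
Set Implicit Arguments. Unset Strict Implicit. Unset Printing Implicit Defensive.
Import Order.TTheory GRing.Theory Num.Theory.
Local Open Scope ring_scope.

Definition is_proj (R : realType) (p : nat) (P : 'M[R]_p) : Prop :=
  P^T = P /\ P *m P = P.

Definition frob2 (R : realType) (p : nat) (A : 'M[R]_p) : R := \tr (A^T *m A).

Definition Dw2 (R : realType) (p : nat) (w : nat -> R) (P1 P2 : 'M[R]_p) : R :=
  2^-1 * frob2 (w (\rank P1) *: P1 - w (\rank P2) *: P2).

Definition Dw (R : realType) (p : nat) (w : nat -> R) (P1 P2 : 'M[R]_p) : R :=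
  Num.sqrt (Dw2 w P1 P2).

Definition mw (R : realType) (w : nat -> R) (k1 k2 : nat) : R :=
  (w k1 ^+ 2 * k1%:R + w k2 ^+ 2 * k2%:R) / 2.

Definition lower_bd (R : realType) (w : nat -> R) (k1 k2 : nat) : R :=
  mw w k1 k2 - w k1 * w k2 * (minn k1 k2)%:R.

Definition upper_bd (R : realType) (p : nat) (w : nat -> R) (k1 k2 : nat) : R :=
  mw w k1 k2 + w k1 * w k2 * Num.min (p%:R - k1%:R - k2%:R) 0.

From mathcomp Require Import all_boot all_order all_algebra.
From mathcomp Require Import reals.
From mathcomp Require Import ring lra zify.
Set Implicit Arguments. Unset Strict Implicit. Unset Printing Implicit Defensive.
Import Order.TTheory GRing.Theory Num.Theory.
Local Open Scope ring_scope.

(** [D_w(P1, P2)] is the Frobenius distance between [w(k1) P1 / sqrt 2] and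
    [w(k2) P2 / sqrt 2], and [P |-> w(rank P) P] is injective for positive
    weights, so [D_w] is a metric.  For projectors,
    [||w1 P1 - w2 P2||^2 = w1^2 k1 + w2^2 k2 - 2 w1 w2 tr(P1 P2)], so both
    bounds amount to bounds on [tr(P1 P2)].  That trace is
    the squared norm of [P2 P1], hence nonnegative; applying this to the pairs
    [(P1, 1 - P2)], [(1 - P1, P2)] and [(1 - P1, 1 - P2)] gives
    [max(0, k1 + k2 - p) <= tr(P1 P2) <= min(k1, k2)].  Diagonal projectors
    [pid_mx k1] and [pid_mx k2], resp. [pid_mx k1] and [copid_mx (p - k2)],
    attain the two extremes. *)

Lemma mxtrace_idem (F : fieldType) (n : nat) (P : 'M[F]_n) :
  P *m P = P -> \tr P = (\rank P)%:R.
Proof.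
move=> PP; move: (mulmx_base P) (col_base_full P) (row_base_free P).
move: (col_base P) (row_base P) => C B eP C_full B_free.
have BC1 : B *m C = 1%:M.
  by apply: (row_free_inj B_free); apply: (row_full_inj C_full);
    rewrite mul1mx !mulmxA eP -mulmxA eP PP.
by rewrite -[in LHS]eP mxtrace_mulC BC1 mxtrace1.
Qed.

Section Frobenius.
Variables (R : realType) (n : nat).
Implicit Types A B : 'M[R]_n.

Definition frob_dot A B : R := \tr (A^T *m B).

Lemma frob_dotC A B : frob_dot A B = frob_dot B A.
Proof. by rewrite /frob_dot -mxtrace_tr trmx_mul trmxK. Qed.

Lemma frob2E A : frob2 A = \sum_i \sum_j A j i ^+ 2.
Proof.
apply: eq_bigr => i _; rewrite mxE.
by apply: eq_bigr => j _; rewrite mxE expr2.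
Qed.

Lemma frob2_ge0 A : 0 <= frob2 A.
Proof. by rewrite frob2E; do 2![apply: sumr_ge0 => ? _]; exact: sqr_ge0. Qed.

Lemma frob2_eq0 A : (frob2 A == 0) = (A == 0).
Proof.
apply/idP/eqP => [|->]; last by rewrite /frob2 mulmx0 mxtrace0.
rewrite frob2E psumr_eq0 => [/allP A0|i _]; last first.
  by apply: sumr_ge0 => j _; exact: sqr_ge0.
apply/matrixP => j i; rewrite mxE; apply/eqP; rewrite -sqrf_eq0.
move: (A0 i (mem_index_enum i)); rewrite psumr_eq0 => [/allP/(_ j (mem_index_enum j))//|k _].
exact: sqr_ge0.
Qed.

Lemma frob2N A : frob2 (- A) = frob2 A.
Proof. by rewrite /frob2 [(- A)^T]linearN mulNmx mulmxN opprK. Qed.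

Lemma frob2_linear a b A B :
  frob2 (a *: A + b *: B)
  = a ^+ 2 * frob2 A + 2 * a * b * frob_dot A B + b ^+ 2 * frob2 B.
Proof.
rewrite /frob2 [(_ + _)^T]linearD /= [(a *: A)^T]linearZ [(b *: B)^T]linearZ /=.
rewrite mulmxDl !mulmxDr -!scalemxAl -!scalemxAr.
rewrite !mxtraceD !mxtraceZ -/(frob_dot A B) -/(frob_dot B A) frob_dotC; ring.
Qed.

Lemma frob_dot_le A B :
  frob_dot A B <= Num.sqrt (frob2 A) * Num.sqrt (frob2 B).
Proof.
move: (sqr_sqrtr (frob2_ge0 A)) (sqr_sqrtr (frob2_ge0 B)).
move: (sqrtr_ge0 (frob2 A)) (sqrtr_ge0 (frob2 B)).
move: (Num.sqrt (frob2 A)) (Num.sqrt (frob2 B)) => a b a_ge0 b_ge0 a2 b2.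
have [a0|a_neq0] := eqVneq a 0.
  move/eqP: a2; rewrite a0 expr0n eq_sym frob2_eq0 => /eqP->.
  by rewrite /frob_dot trmx0 mul0mx mxtrace0 mul0r.
have [b0|b_neq0] := eqVneq b 0.
  move/eqP: b2; rewrite b0 expr0n eq_sym frob2_eq0 => /eqP->.
  by rewrite /frob_dot mulmx0 mxtrace0 mulr0.
have ab_gt0 : 0 < a * b by rewrite mulr_gt0 // lt_def ?a_neq0 ?b_neq0.
have := frob2_ge0 (b *: A + (- a) *: B); rewrite frob2_linear -a2 -b2 => H.
by rewrite -(ler_pM2l ab_gt0); nra.
Qed.

Lemma frob_triangle A B :
  Num.sqrt (frob2 (A + B)) <= Num.sqrt (frob2 A) + Num.sqrt (frob2 B).
Proof.
have := frob2_linear 1 1 A B; rewrite !scale1r => ->.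
move: (frob_dot_le A B) (sqr_sqrtr (frob2_ge0 A)) (sqr_sqrtr (frob2_ge0 B)).
move: (sqrtr_ge0 (frob2 A)) (sqrtr_ge0 (frob2 B)).
move: (Num.sqrt (frob2 A)) (Num.sqrt (frob2 B)) => a b a_ge0 b_ge0 AB_le <- <-.
rewrite -(ger0_norm (addr_ge0 a_ge0 b_ge0)) -sqrtr_sqr; apply: ler_wsqrtr; nra.
Qed.

End Frobenius.

Section Projectors.
Variables (R : realType) (n : nat).
Implicit Types P Q : 'M[R]_n.

Lemma proj_mxtrace P : is_proj P -> \tr P = (\rank P)%:R.
Proof. by case=> _ /mxtrace_idem. Qed.

Lemma proj_frob2 P : is_proj P -> frob2 P = \tr P.
Proof. by case=> tP PP; rewrite /frob2 tP PP. Qed.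

Lemma proj_compl P : is_proj P -> is_proj (1%:M - P).
Proof.
case=> tP PP; split; first by rewrite linearB /= trmx1 tP.
by rewrite mulmxBl mul1mx mulmxBr mulmx1 PP subrr subr0.
Qed.

Lemma proj_pid k : (k <= n)%N -> is_proj (pid_mx k : 'M[R]_n).
Proof. by move=> kn; split; [exact: tr_pid_mx | exact: pid_mx_id]. Qed.

Lemma proj_copid k : (k <= n)%N -> is_proj (copid_mx k : 'M[R]_n).
Proof. by move/proj_pid/proj_compl. Qed.

Lemma mxtrace_pid k : (k <= n)%N -> \tr (pid_mx k : 'M[R]_n) = k%:R.
Proof. by move=> kn; rewrite proj_mxtrace ?rank_pid_mx //; apply: proj_pid. Qed.

Lemma proj_mxtrace_mul_ge0 P Q : is_proj P -> is_proj Q -> 0 <= \tr (P *m Q).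
Proof.
case=> tP PP [tQ QQ].
have <- : frob2 (Q *m P) = \tr (P *m Q).
  rewrite /frob2 trmx_mul tP tQ mulmxA -(mulmxA P Q Q) QQ.
  by rewrite mxtrace_mulC mulmxA PP.
exact: frob2_ge0.
Qed.

Lemma proj_mxtrace_mul_le_rank P Q :
  is_proj P -> is_proj Q -> \tr (P *m Q) <= (\rank P)%:R.
Proof.
move=> hP hQ; have := proj_mxtrace_mul_ge0 hP (proj_compl hQ).
by rewrite mulmxBr mulmx1 raddfB /= (proj_mxtrace hP) subr_ge0.
Qed.

Lemma proj_mxtrace_mul_le_min P Q :
  is_proj P -> is_proj Q -> \tr (P *m Q) <= (minn (\rank P) (\rank Q))%:R.
Proof.
move=> hP hQ; have := proj_mxtrace_mul_le_rank hP hQ.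
have := proj_mxtrace_mul_le_rank hQ hP; rewrite mxtrace_mulC.
by case: leqP.
Qed.

Lemma proj_mxtrace_mul_ge P Q : is_proj P -> is_proj Q ->
  (\rank P)%:R + (\rank Q)%:R - n%:R <= \tr (P *m Q).
Proof.
move=> hP hQ; have := proj_mxtrace_mul_ge0 (proj_compl hP) (proj_compl hQ).
rewrite mulmxBr mulmx1 !mulmxBl !mul1mx !raddfB /= mxtrace1.
by rewrite (proj_mxtrace hP) (proj_mxtrace hQ); lra.
Qed.

End Projectors.

Section WeightedDistance.
Variables (R : realType) (p : nat) (w : nat -> R).
Implicit Types P : 'M[R]_p.

Lemma Dw_sym P1 P2 : Dw w P1 P2 = Dw w P2 P1.
Proof. by rewrite /Dw /Dw2 -opprB frob2N. Qed.

Lemma Dw_triangle P1 P2 P3 : Dw w P1 P3 <= Dw w P1 P2 + Dw w P2 P3.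
Proof.
have half_ge0 : 0 <= 2^-1 :> R by rewrite invr_ge0 ler0n.
rewrite /Dw /Dw2 !sqrtrM // -mulrDr ler_wpM2l ?sqrtr_ge0 //.
by rewrite -[X in frob2 X](subrKA (w (\rank P2) *: P2)) frob_triangle.
Qed.

Lemma Dw_eq0 P1 P2 : w (\rank P1) != 0 -> w (\rank P2) != 0 ->
  (Dw w P1 P2 = 0) <-> (P1 = P2).
Proof.
move=> w1_neq0 w2_neq0; split => [|->]; last first.
  by rewrite /Dw /Dw2 subrr /frob2 mulmx0 mxtrace0 mulr0 sqrtr0.
move/eqP; rewrite sqrtr_eq0 /Dw2 pmulr_rle0 ?invr_gt0 // => frob_le0.
have /eqP : frob2 (w (\rank P1) *: P1 - w (\rank P2) *: P2) = 0.
  by apply/le_anti; rewrite frob_le0 frob2_ge0.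
rewrite frob2_eq0 subr_eq0 => /eqP wP12.
have rank12 : \rank P1 = \rank P2.
  by rewrite -(mxrank_scale_nz P1 w1_neq0) wP12 mxrank_scale_nz.
by move: wP12; rewrite rank12 => /(scalerI w2_neq0).
Qed.

Lemma Dw2E P1 P2 : is_proj P1 -> is_proj P2 ->
  Dw2 w P1 P2 = mw w (\rank P1) (\rank P2)
                - w (\rank P1) * w (\rank P2) * \tr (P1 *m P2).
Proof.
move=> hP1 hP2; rewrite /Dw2 -scaleNr frob2_linear (proj_frob2 hP1) (proj_frob2 hP2).
rewrite (proj_mxtrace hP1) (proj_mxtrace hP2).
have -> : frob_dot P1 P2 = \tr (P1 *m P2) by rewrite /frob_dot; case: hP1 => ->.
by rewrite /mw; field.
Qed.

Hypothesis w_ge0 : forall k, (k <= p)%N -> 0 <= w k.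

Lemma w_rank_ge0 P1 P2 : 0 <= w (\rank P1) * w (\rank P2).
Proof. by rewrite mulr_ge0 ?w_ge0 ?rank_leq_row. Qed.

Lemma lower_bd_le_Dw2 P1 P2 : is_proj P1 -> is_proj P2 ->
  lower_bd w (\rank P1) (\rank P2) <= Dw2 w P1 P2.
Proof.
move=> hP1 hP2; rewrite Dw2E // lerD2l lerN2.
by rewrite ler_wpM2l ?w_rank_ge0 ?proj_mxtrace_mul_le_min.
Qed.

Lemma Dw2_le_upper_bd P1 P2 : is_proj P1 -> is_proj P2 ->
  Dw2 w P1 P2 <= upper_bd p w (\rank P1) (\rank P2).
Proof.
move=> hP1 hP2; rewrite Dw2E // lerD2l -mulrN ler_wpM2l ?w_rank_ge0 //.
have := proj_mxtrace_mul_ge hP1 hP2; have := proj_mxtrace_mul_ge0 hP1 hP2.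
by move=> *; rewrite le_min; apply/andP; split; lra.
Qed.

End WeightedDistance.

Section Sharpness.
Variables (R : realType) (p : nat) (w : nat -> R) (k1 k2 : nat).
Hypotheses (k1p : (k1 <= p)%N) (k2p : (k2 <= p)%N).

Lemma rank_copid_mx_sub : \rank (copid_mx (p - k2) : 'M[R]_p) = k2.
Proof. by rewrite rank_copid_mx ?leq_subr // subKn. Qed.

Lemma Dw2_pid :
  Dw2 w (pid_mx k1 : 'M[R]_p) (pid_mx k2) = lower_bd w k1 k2.
Proof.
have kmin_p : (minn k1 k2 <= p)%N by rewrite geq_min k1p.
rewrite (Dw2E w (proj_pid R k1p) (proj_pid R k2p)) !rank_pid_mx //.
by rewrite mul_pid_mx (minn_idPr kmin_p) mxtrace_pid.
Qed.

Lemma Dw2_pid_copid :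
  Dw2 w (pid_mx k1 : 'M[R]_p) (copid_mx (p - k2)) = upper_bd p w k1 k2.
Proof.
have kmin_p : (minn k1 (p - k2) <= p)%N by rewrite geq_min k1p.
rewrite (Dw2E w (proj_pid R k1p) (proj_copid R (leq_subr k2 p))).
rewrite rank_pid_mx // rank_copid_mx_sub.
rewrite mulmxBr mulmx1 mul_pid_mx (minn_idPr kmin_p) raddfB /= !mxtrace_pid //.
rewrite /upper_bd -mulrN; congr (_ + _ * _).
have [k12_le|k12_gt] := leqP k1 (p - k2).
  have : (k1 + k2 <= p)%N by lia.
  by rewrite -(ler_nat R) natrD subrr => ?; rewrite min_r; lra.
have : (p < k1 + k2)%N by lia.
by rewrite -(ltr_nat R) natrD natrB // => ?; rewrite min_l; lra.
Qed.

End Sharpness.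

Theorem proposition2p1 (R : realType) (p : nat) (w : nat -> R) :
  (1 <= p)%N ->
  (forall k : nat, (k <= p)%N -> 0 < w k) ->
  ((forall P1 P2 : 'M[R]_p, is_proj P1 -> is_proj P2 -> 0 <= Dw w P1 P2) /\
   (forall P1 P2 : 'M[R]_p, is_proj P1 -> is_proj P2 ->
      (Dw w P1 P2 = 0 <-> P1 = P2)) /\
   (forall P1 P2 : 'M[R]_p, is_proj P1 -> is_proj P2 ->
      Dw w P1 P2 = Dw w P2 P1) /\
   (forall P1 P2 P3 : 'M[R]_p, is_proj P1 -> is_proj P2 -> is_proj P3 ->
      Dw w P1 P3 <= Dw w P1 P2 + Dw w P2 P3)) /\
  (forall P1 P2 : 'M[R]_p, is_proj P1 -> is_proj P2 ->
     lower_bd w (\rank P1) (\rank P2) <= Dw2 w P1 P2 /\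
     Dw2 w P1 P2 <= upper_bd p w (\rank P1) (\rank P2)) /\
  (forall k1 k2 : nat, (k1 <= p)%N -> (k2 <= p)%N ->
     (exists P1 P2 : 'M[R]_p, [/\ is_proj P1, is_proj P2, \rank P1 = k1,
        \rank P2 = k2 & Dw2 w P1 P2 = lower_bd w k1 k2]) /\
     (exists P1 P2 : 'M[R]_p, [/\ is_proj P1, is_proj P2, \rank P1 = k1,
        \rank P2 = k2 & Dw2 w P1 P2 = upper_bd p w k1 k2])).
Proof.
move=> _ w_gt0.
have w_ge0 k (kp : (k <= p)%N) : 0 <= w k by rewrite ltW ?w_gt0.
have w_rank_neq0 (P : 'M[R]_p) : w (\rank P) != 0.
  by rewrite lt0r_neq0 ?w_gt0 ?rank_leq_row.
split; [split; [|split; [|split]] | split].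
- by move=> *; exact: sqrtr_ge0.
- by move=> P1 P2 _ _; exact: Dw_eq0.
- by move=> P1 P2 _ _; exact: Dw_sym.
- by move=> P1 P2 P3 _ _ _; exact: Dw_triangle.
- by move=> P1 P2 hP1 hP2; split; [exact: lower_bd_le_Dw2 | exact: Dw2_le_upper_bd].
- move=> k1 k2 k1p k2p; split.
    exists (pid_mx k1), (pid_mx k2).
    by split; rewrite ?Dw2_pid ?rank_pid_mx //; apply: proj_pid.
  exists (pid_mx k1), (copid_mx (p - k2)).
  split; rewrite ?Dw2_pid_copid ?rank_pid_mx ?rank_copid_mx_sub //.
    exact: proj_pid.
  by apply: proj_copid; rewrite leq_subr.
Qed.
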